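(* Let $\{G_1,\dots,G_g\}$ be a partition of $\{1,\dots,p\}$ into non-empty groups. Then the group wedge $\|\beta\|_{GWedge}:=\|\beta^{\mathcal{G}}\|_W$ defines a norm on $\mathbb{R}^p$.
   Context: For $\beta\in\mathbb{R}^p$ and a group $G_j$, $\|\beta_{G_j}\|_2:=\sqrt{|G_j|}\sqrt{\sum_{i\in G_j}\beta_i^2}$, and $\beta^{\mathcal{G}}:=(\|\beta_{G_1}\|_2,\dots,\|\beta_{G_g}\|_2)^{T}\in\mathbb{R}^g$. The wedge norm on $\mathbb{R}^g$ is $\|x\|_W:=\inf_{a\in\mathcal{A}}\frac12\sum_{j=1}^g\big(x_j^2/a_j+a_j\big)$ with $\mathcal{A}:=\{a\in\mathbb{R}^g:a_j>0\ \forall j,\ a_1\ge\dots\ge a_g\}$. *)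

From HB Require Import structures.
From mathcomp Require Import all_boot all_order all_algebra.
From mathcomp Require Import classical_sets reals.
Set Implicit Arguments. Unset Strict Implicit. Unset Printing Implicit Defensive.
Import Order.TTheory GRing.Theory Num.Theory.
Local Open Scope ring_scope.
Local Open Scope classical_set_scope.

Definition group_l2 {R : realType} {p : nat} (Gj : {set 'I_p}) (beta : 'I_p -> R) : R :=
  Num.sqrt (#|Gj|%:R) * Num.sqrt (\sum_(i in Gj) beta i ^+ 2).

Definition group_vec {R : realType} {p g : nat} (G : 'I_g -> {set 'I_p})
  (beta : 'I_p -> R) : 'I_g -> R := fun j => group_l2 (G j) beta.

Definition wedge_cone {R : realType} {g : nat} (a : 'I_g -> R) : Prop :=
  (forall j, 0 < a j) /\ (forall j k : 'I_g, (j <= k)%N -> a k <= a j).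

Definition wedge_norm {R : realType} {g : nat} (x : 'I_g -> R) : R :=
  inf [set v : R | exists a : 'I_g -> R, wedge_cone a /\
        v = 2^-1 * \sum_(j < g) (x j ^+ 2 / a j + a j)].

Definition group_wedge {R : realType} {p g : nat} (G : 'I_g -> {set 'I_p})
  (beta : 'I_p -> R) : R := wedge_norm (group_vec G beta).

Definition is_group_partition {p g : nat} (G : 'I_g -> {set 'I_p}) : Prop :=
  (forall j, G j != finset.set0) /\
  (forall j k, j != k -> G j :&: G k = finset.set0) /\
  (forall i : 'I_p, exists j, i \in G j).

Definition is_norm {R : realType} {p : nat} (N : ('I_p -> R) -> R) : Prop :=
  (forall x, 0 <= N x) /\
  (forall x, N x = 0 -> forall i, x i = 0) /\
  (forall (c : R) x, N (fun i => c * x i) = `|c| * N x) /\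
  (forall x y, N (fun i => x i + y i) <= N x + N y).

(** For every admissible weight vector [a], the AM-GM inequality gives
    [x_j^2 / a_j + a_j >= 2 |x_j|], so the infimum defining the wedge norm
    exists and dominates the l1 norm; this yields positivity and
    definiteness. The cone of admissible weights is closed under positive
    scaling and under addition, and the objective is jointly homogeneous and
    subadditive in [(x, a)] because [(x + y)^2 / (a + b) <= x^2/a + y^2/b];
    taking infima shows that the wedge norm is a norm on [R^g]. It only
    depends on the [|x_j|] and is monotone in them, so composing it with the
    group norms [beta |-> ||beta_{G_j}||_2], which are absolutely homogeneous
    and subadditive (Minkowski), gives a seminorm on [R^p]; it is definite
    because the groups are non-empty and cover [{1, ..., p}]. *)
From mathcomp Require Import all_boot all_order all_algebra.
From mathcomp Require Import boolp classical_sets reals ring lra.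
Import Order.TTheory GRing.Theory Num.Theory.
Set Implicit Arguments. Unset Strict Implicit.
Local Open Scope ring_scope.

Section RealInequalities.
Variable R : realFieldType.

Lemma ler_AGM2_div (x a : R) : 0 < a -> 2 * `|x| <= x ^+ 2 / a + a.
Proof.
move=> a_gt0; rewrite -(ler_pM2r a_gt0) [leRHS]mulrDl divfK ?lt0r_neq0 //.
rewrite -real_normK ?num_real //; have := sqr_ge0 (`|x| - a); nra.
Qed.

Lemma ler_sqrD_divD (x y a b : R) : 0 < a -> 0 < b ->
  (x + y) ^+ 2 / (a + b) <= x ^+ 2 / a + y ^+ 2 / b.
Proof.
move=> a_gt0 b_gt0; have ab_gt0 : 0 < a * b by rewrite mulr_gt0.
rewrite ler_pdivrMr ?addr_gt0 //.
have -> : (x ^+ 2 / a + y ^+ 2 / b) * (a + b) =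
    x ^+ 2 + y ^+ 2 + (x * b) ^+ 2 / (a * b) + (y * a) ^+ 2 / (a * b).
  by field; rewrite !lt0r_neq0.
have : 2 * x * y <= ((x * b) ^+ 2 + (y * a) ^+ 2) / (a * b).
  by rewrite ler_pdivlMr //; have := sqr_ge0 (x * b - y * a); nra.
rewrite mulrDl; nra.
Qed.

End RealInequalities.

Section L2Norm.
Variables (R : rcfType) (I : finType) (A : {pred I}).
Implicit Types (b c : I -> R).

Definition l2norm b : R := Num.sqrt (\sum_(i in A) b i ^+ 2).

Lemma sumsq_ge0 b : 0 <= \sum_(i in A) b i ^+ 2.
Proof. by apply: sumr_ge0 => i _; apply: sqr_ge0. Qed.

Lemma l2norm_ge0 b : 0 <= l2norm b.
Proof. exact: sqrtr_ge0. Qed.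

Lemma sqr_l2norm b : l2norm b ^+ 2 = \sum_(i in A) b i ^+ 2.
Proof. by rewrite sqr_sqrtr ?sumsq_ge0. Qed.

Lemma l2norm_eq0 b : l2norm b = 0 -> {in A, forall i, b i = 0}.
Proof.
move=> /eqP; rewrite sqrtr_eq0 => sum_le0.
have /psumr_eq0P sum_eq0 : \sum_(i in A) b i ^+ 2 = 0.
  by apply/le_anti; rewrite sum_le0 sumsq_ge0.
move=> i iA; apply/eqP; rewrite -sqrf_eq0; apply/eqP.
by apply: sum_eq0 => // j _; apply: sqr_ge0.
Qed.

Lemma sum_mul_le_l2norm b c : \sum_(i in A) b i * c i <= l2norm b * l2norm c.
Proof.
have [/l2norm_eq0 b0|nz_b] := eqVneq (l2norm b) 0.
  by rewrite big1 ?mulr_ge0 ?l2norm_ge0 // => i /b0->; rewrite mul0r.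
have [/l2norm_eq0 c0|nz_c] := eqVneq (l2norm c) 0.
  by rewrite big1 ?mulr_ge0 ?l2norm_ge0 // => i /c0->; rewrite mulr0.
set u := l2norm b; set v := l2norm c.
have uv_gt0 : 0 < u * v by rewrite mulr_gt0 // lt0r ?nz_b ?nz_c l2norm_ge0.
(* Summing [2 (b_i v) (c_i u) <= (b_i v)^2 + (c_i u)^2] gives [2 u v S <= 2 u^2 v^2]. *)
have : u * v * 2 * \sum_(i in A) b i * c i <=
    v ^+ 2 * \sum_(i in A) b i ^+ 2 + u ^+ 2 * \sum_(i in A) c i ^+ 2.
  rewrite !mulr_sumr -big_split /=; apply: ler_sum => i _.
  by have := sqr_ge0 (b i * v - c i * u); nra.
rewrite -!sqr_l2norm -/u -/v => ineq.
by rewrite -(ler_pM2l uv_gt0); nra.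
Qed.

Lemma l2normD_le b c : l2norm (fun i => b i + c i) <= l2norm b + l2norm c.
Proof.
rewrite -[leRHS]ger0_norm ?addr_ge0 ?l2norm_ge0 // -sqrtr_sqr ler_wsqrtr //.
have -> : \sum_(i in A) (b i + c i) ^+ 2 =
    \sum_(i in A) b i ^+ 2 + \sum_(i in A) c i ^+ 2 + 2 * \sum_(i in A) b i * c i.
  by rewrite mulr_sumr -!big_split /=; apply: eq_bigr => i _; ring.
by rewrite -!sqr_l2norm sqrrD; have := sum_mul_le_l2norm b c; nra.
Qed.

Lemma l2normZ b (k : R) : l2norm (fun i => k * b i) = `|k| * l2norm b.
Proof.
rewrite /l2norm -sqrtr_sqr -sqrtrM ?sqr_ge0 // mulr_sumr.
by under eq_bigr do rewrite exprMn.
Qed.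

End L2Norm.

Section GroupL2.
Variables (R : realType) (p : nat).
Implicit Types (b c : 'I_p -> R) (A : {set 'I_p}).

Lemma group_l2E A b : group_l2 A b = Num.sqrt (#|A|%:R) * l2norm (mem A) b.
Proof. by []. Qed.

Lemma group_l2_ge0 A b : 0 <= group_l2 A b.
Proof. by rewrite mulr_ge0 ?sqrtr_ge0. Qed.

Lemma group_l2D_le A b c :
  group_l2 A (fun i => b i + c i) <= group_l2 A b + group_l2 A c.
Proof. by rewrite !group_l2E -mulrDr ler_wpM2l ?sqrtr_ge0 ?l2normD_le. Qed.

Lemma group_l2Z A b (k : R) : group_l2 A (fun i => k * b i) = `|k| * group_l2 A b.
Proof. by rewrite !group_l2E l2normZ mulrCA. Qed.

Lemma group_l2_eq0 A b :
  A != finset.set0 -> group_l2 A b = 0 -> {in A, forall i, b i = 0}.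
Proof.
move=> A_neq0 /eqP; rewrite group_l2E mulf_eq0 sqrtr_eq0 leNgt ltr0n card_gt0.
by rewrite A_neq0 /= => /eqP /l2norm_eq0.
Qed.

End GroupL2.

Section WedgeNorm.
Variables (R : realType) (g : nat).
Implicit Types (x y a b : 'I_g -> R).

Definition wedge_objective x a : R := 2^-1 * \sum_(j < g) (x j ^+ 2 / a j + a j).

Lemma wedge_cone1 : wedge_cone (fun _ : 'I_g => 1 : R).
Proof. by split. Qed.

Lemma wedge_coneZ a (t : R) : 0 < t -> wedge_cone a -> wedge_cone (fun j => t * a j).
Proof.
move=> t_gt0 [a_gt0 a_mono]; split => [j|j k jk]; first by rewrite mulr_gt0.
by rewrite ler_pM2l ?a_mono.
Qed.

Lemma wedge_coneD a b : wedge_cone a -> wedge_cone b -> wedge_cone (fun j => a j + b j).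
Proof.
move=> [a_gt0 a_mono] [b_gt0 b_mono]; split => [j|j k jk]; first by rewrite addr_gt0.
by rewrite lerD ?a_mono ?b_mono.
Qed.

Lemma sum_norm_le_wedge_objective x a :
  wedge_cone a -> \sum_(j < g) `|x j| <= wedge_objective x a.
Proof.
move=> [a_gt0 _]; rewrite /wedge_objective ler_pdivlMl ?ltr0n // mulr_sumr.
by apply: ler_sum => j _; apply: ler_AGM2_div.
Qed.

Lemma wedge_norm_le_objective x a : wedge_cone a -> wedge_norm x <= wedge_objective x a.
Proof.
move=> a_cone; apply: ge_inf; last by exists a.
exists 0 => _ [b [b_cone ->]].
exact: le_trans (sumr_ge0 _ _) (sum_norm_le_wedge_objective x b_cone).
Qed.

Lemma lb_le_wedge_norm x w :
  (forall a, wedge_cone a -> w <= wedge_objective x a) -> w <= wedge_norm x.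
Proof.
move=> w_lb; apply: lb_le_inf; last by move=> _ [a [a_cone ->]]; apply: w_lb.
by exists (wedge_objective x (fun=> 1)), (fun=> 1); split => //; apply: wedge_cone1.
Qed.

Lemma sum_norm_le_wedge_norm x : \sum_(j < g) `|x j| <= wedge_norm x.
Proof. by apply: lb_le_wedge_norm => a; apply: sum_norm_le_wedge_objective. Qed.

Lemma wedge_norm_ge0 x : 0 <= wedge_norm x.
Proof. exact: le_trans (sumr_ge0 _ _) (sum_norm_le_wedge_norm x). Qed.

Lemma wedge_norm_eq0 x : wedge_norm x = 0 -> forall j, x j = 0.
Proof.
move=> W0 j; have sum_eq0 : \sum_(k < g) `|x k| = 0.
  by apply/le_anti; rewrite sumr_ge0 // andbT -[leRHS]W0 sum_norm_le_wedge_norm.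
by apply/normr0_eq0/(psumr_eq0P _ sum_eq0).
Qed.

Lemma wedge_norm_le_norm x y :
  (forall j, `|x j| <= `|y j|) -> wedge_norm x <= wedge_norm y.
Proof.
move=> x_le_y; apply: lb_le_wedge_norm => a a_cone.
apply: le_trans (wedge_norm_le_objective x a_cone) _; case: a_cone => a_gt0 _.
rewrite /wedge_objective ler_pM2l ?invr_gt0 ?ltr0n //; apply: ler_sum => j _.
rewrite lerD2r ler_pM2r ?invr_gt0 //.
rewrite -(real_normK (num_real (x j))) -(real_normK (num_real (y j))).
by apply: lerXn2r; rewrite ?nnegrE ?normr_ge0 ?x_le_y.
Qed.

Lemma wedge_objectiveZ x a (t : R) : 0 < t -> wedge_cone a ->
  wedge_objective (fun j => t * x j) (fun j => t * a j) = t * wedge_objective x a.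
Proof.
move=> t_gt0 [a_gt0 _]; rewrite /wedge_objective mulrCA; congr (_ * _); rewrite mulr_sumr.
by apply: eq_bigr => j _; field; rewrite !lt0r_neq0.
Qed.

Lemma wedge_normZ_le x (t : R) :
  0 < t -> wedge_norm (fun j => t * x j) <= t * wedge_norm x.
Proof.
move=> t_gt0; rewrite -ler_pdivrMl //; apply: lb_le_wedge_norm => a a_cone.
rewrite ler_pdivrMl // -wedge_objectiveZ //.
exact/wedge_norm_le_objective/wedge_coneZ.
Qed.

Lemma wedge_normZ x (t : R) :
  0 <= t -> wedge_norm (fun j => t * x j) = t * wedge_norm x.
Proof.
have normZ_gt0 y (s : R) : 0 < s -> wedge_norm (fun j => s * y j) = s * wedge_norm y.
  move=> s_gt0; apply/le_anti; rewrite wedge_normZ_le //= -ler_pdivlMl //.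
  have := @wedge_normZ_le (fun j => s * y j) s^-1; rewrite invr_gt0 => /(_ s_gt0).
  by under [X in wedge_norm X]funext do rewrite mulrA mulVf ?lt0r_neq0 // mul1r.
rewrite le_eqVlt => /predU1P[<-|]; last exact: normZ_gt0.
(* [W 0 = W (2 * 0) = 2 * W 0] forces [W 0 = 0]. *)
have := normZ_gt0 (fun j => 0 * x j) _ (ltr0Sn R 1).
have -> : (fun j => 2 * (0 * x j)) = (fun j => 0 * x j).
  by apply/funext => j; rewrite !mul0r mulr0.
by rewrite mul0r; lra.
Qed.

Lemma wedge_normD_le x y :
  wedge_norm (fun j => x j + y j) <= wedge_norm x + wedge_norm y.
Proof.
rewrite -lerBlDr; apply: lb_le_wedge_norm => a a_cone.
rewrite lerBlDr addrC -lerBlDr; apply: lb_le_wedge_norm => b b_cone.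
rewrite lerBlDr.
apply: le_trans (wedge_norm_le_objective _ (wedge_coneD a_cone b_cone)) _.
move: a_cone b_cone => [a_gt0 _] [b_gt0 _].
rewrite /wedge_objective [leRHS]addrC -mulrDr ler_pM2l ?invr_gt0 ?ltr0n // -big_split /=.
by apply: ler_sum => j _; rewrite addrACA lerD2r ler_sqrD_divD.
Qed.

End WedgeNorm.

Theorem lemma8 (R : realType) (p g : nat) (G : 'I_g -> {set 'I_p}) :
  is_group_partition G -> is_norm (@group_wedge R p g G).
Proof.
move=> [G_neq0 [_ G_cover]]; rewrite /group_wedge.
split; [|split; [|split]].
- by move=> beta; apply: wedge_norm_ge0.
- move=> beta /wedge_norm_eq0 G0 i; have [j iGj] := G_cover i.
  exact: group_l2_eq0 (G_neq0 j) (G0 j) i iGj.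
- move=> c beta; rewrite -wedge_normZ //; congr wedge_norm.
  by apply/funext => j; apply: group_l2Z.
- move=> beta gamma; apply: le_trans (wedge_normD_le _ _).
  apply: wedge_norm_le_norm => j; rewrite /group_vec.
  by rewrite !ger0_norm ?addr_ge0 ?group_l2_ge0 ?group_l2D_le.
Qed.
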